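(* Let $G$ be a finite graph that admits a Kasteleyn signing (for example, any planar graph). If $C_1,\dots,C_n$ are channels of $G$ that are linearly independent in the $\mathbf{Z}/2\mathbf{Z}$-vector space $\mathcal{C}(G)$, then $2^n$ divides $m_G^2$. In particular, $|\mathcal{C}(G)|$ divides $m_G^2$. If moreover $G$ is bipartite and admits a bipartite Kasteleyn signing (for example, $G$ is bipartite and planar), and $C_1,\dots,C_n\in\mathcal{C}_B(G)$ are linearly independent, then $2^n$ divides $m_G$.
   Context: All graphs are finite, undirected, without self-loops, with at most one edge between two vertices. $m_G$ denotes the number of perfect matchings of $G$. For a vertex $v$, $N(v)$ is its set of neighbours. A channel of $G=(V,E)$ is a set $C\subseteq V$ such that $|N(v)\cap C|$ is even for every $v\in V$ (the empty set is a channel). $\mathcal{C}(G)$ is the set of channels; it is a vector space over $\mathbf{Z}/2\mathbf{Z}$ with addition given by symmetric difference. If $G$ is bipartite with vertices colored black and white, $\mathcal{C}_B(G)$ (resp. $\mathcal{C}_W(G)$) denotes the subspace of channels consisting only of black (resp. white) vertices. A Kasteleyn signing of $G$ with adjacency matrix $A=(a_{ij})$ is a matrix $K=(\pm a_{ij})$ (obtained by changing signs of some entries) with $\det K=m_G^2$. For bipartite $G$, the bipartite adjacency matrix $B$ is the submatrix of $A$ with rows indexed by white and columns by black vertices; a bipartite Kasteleyn signing is a matrix $H=(\pm b_{ij})$ with $\det H=m_G$ (when $B$ is square; if $B$ is not square, $m_G=0$). *)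

From HB Require Import structures.
From mathcomp Require Import all_boot all_order all_algebra.
Set Implicit Arguments. Unset Strict Implicit. Unset Printing Implicit Defensive.
Import GRing.Theory Num.Theory.

Definition simple_graph (N : nat) (e : rel 'I_N) : Prop :=
  (forall x y, e x y = e y x) /\ (forall x, e x x = false).

Definition nbhd (N : nat) (e : rel 'I_N) (v : 'I_N) : {set 'I_N} :=
  [set u | e v u].

Definition perfect_matching (N : nat) (e : rel 'I_N) (M : {set {set 'I_N}}) : bool :=
  [forall A in M, exists x, exists y, e x y && (A == [set x; y])] &&
  [forall v, #|[set A in M | v \in A]| == 1%N].

Definition num_pm (N : nat) (e : rel 'I_N) : nat :=
  #|[set M : {set {set 'I_N}} | perfect_matching e M]|.

Definition is_channel (N : nat) (e : rel 'I_N) (C : {set 'I_N}) : bool :=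
  [forall v, ~~ odd #|nbhd e v :&: C|].

(* Addition in the Z/2Z-vector space of subsets: symmetric difference. *)
Definition symdiff (T : finType) (A B : {set T}) : {set T} :=
  (A :\: B) :|: (B :\: A).

(* Linear independence over Z/2Z of a family C_1..C_k: the only subfamily
   (coefficient vector in {0,1}^k) summing to zero is the empty one. *)
Definition lin_indep (T : finType) (k : nat) (C : 'I_k -> {set T}) : Prop :=
  forall S : {set 'I_k}, \big[@symdiff T/set0]_(i in S) C i = set0 -> S = set0.

Definition adj_mx (N : nat) (e : rel 'I_N) : 'M[int]_N :=
  \matrix_(i, j) ((e i j)%:R)%R.

Definition kasteleyn_signing (N : nat) (e : rel 'I_N) (K : 'M[int]_N) : Prop :=
  (forall i j, K i j = adj_mx e i j \/ K i j = (- adj_mx e i j)%R) /\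
  (\det K)%R = (Posz ((num_pm e) ^ 2)).

(* Bipartite graphs: a colouring col (true = black, false = white) such that
   every edge joins vertices of different colours. *)
Definition proper_2col (N : nat) (e : rel 'I_N) (col : 'I_N -> bool) : Prop :=
  forall x y, e x y -> col x != col y.

Definition blacks (N : nat) (col : 'I_N -> bool) : {set 'I_N} := [set v | col v].
Definition whites (N : nat) (col : 'I_N -> bool) : {set 'I_N} := [set v | ~~ col v].

(* Bipartite adjacency matrix: rows indexed by white vertices, columns by
   black vertices (each enumerated in the increasing order of 'I_N). *)
Definition bip_adj_mx (N : nat) (e : rel 'I_N) (col : 'I_N -> bool)
  : 'M[int]_(#|whites col|, #|blacks col|) :=
  \matrix_(i, j) ((e (enum_val i) (enum_val j))%:R)%R.

(* Bipartite Kasteleyn signing: a sign change of B with det H = m_G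
   (the determinant condition only makes sense when B is square). *)
Definition bip_kasteleyn_signing (N : nat) (e : rel 'I_N) (col : 'I_N -> bool)
  (H : 'M[int]_(#|whites col|, #|blacks col|)) : Prop :=
  (forall i j, H i j = bip_adj_mx e col i j \/ H i j = (- bip_adj_mx e col i j)%R) /\
  (forall h : #|whites col| = #|blacks col|,
     (\det (castmx (h, erefl #|blacks col|) H) = (Posz (num_pm e)))%R).

From HB Require Import structures.
From mathcomp Require Import all_boot all_order all_algebra.
Set Implicit Arguments. Unset Strict Implicit. Unset Printing Implicit Defensive.
Import GRing.Theory Num.Theory.
Local Open Scope ring_scope.

(* Modulo 2 a (bipartite) Kasteleyn matrix becomes the (bi)adjacency matrix
   over F_2, and the characteristic vectors of n independent channels are n
   independent vectors of its left kernel.  Multiplying on the left by an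
   integer lift of an invertible F_2 matrix whose first n rows span these
   vectors makes n rows even; the lift has odd determinant, so 2^n divides the
   determinant, which is m_G^2 (resp. m_G).  The channels are exactly the left
   kernel of the adjacency matrix over F_2, so there are 2^r of them, and a
   basis of that kernel gives the divisibility by |C(G)|. *)

Lemma dvdn_det_dvdz_rows (d : nat) m n (Q : 'M[int]_m) : (n <= m)%N ->
  (forall (i : 'I_m) j, (i < n)%N -> (d %| Q i j)%Z) -> (d ^ n %| `|\det Q|)%N.
Proof.
move=> le_nm dQ.
pose D : 'rV[int]_m := \row_i (if (i < n)%N then d%:Z else 1).
pose Q' := \matrix_(i, j) (if (i < n)%N then (Q i j %/ d)%Z else Q i j).
have -> : Q = diag_mx D *m Q'.
  apply/matrixP => i j; rewrite mul_diag_mx !mxE.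
  by case: ifP => [/dQ/divzK|_]; rewrite ?mul1r // mulrC.
rewrite det_mulmx det_diag abszM dvdn_mulr //.
have -> : \prod_i D 0 i = \prod_(i < n) d%:Z.
  rewrite (big_ord_widen_cond _ xpredT (fun _ => d%:Z) le_nm) [RHS]big_mkcond /=.
  by apply: eq_bigr => i _; rewrite mxE; case: ifP.
by rewrite prodr_const -[#|_|]/#|'I_n| card_ord abszX.
Qed.

Section ReductionModPrime.
Variable p : nat.
Hypothesis p_pr : prime p.

Local Notation modp := (intr : int -> 'F_p).

Lemma lift_Fp_mx m n (U : 'M['F_p]_(m, n)) :
  map_mx modp (map_mx (fun x : 'F_p => (x : nat)%:Z) U) = U.
Proof. by apply/matrixP => i j; rewrite !mxE -pmulrn natr_Zp. Qed.

Lemma coprime_det_unitmx_Fp m (P : 'M[int]_m) :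
  map_mx modp P \in unitmx -> coprime p `|\det P|.
Proof.
rewrite unitmxE det_map_mx unitfE -(dvdz_pcharf (pchar_Fp p_pr)).
by rewrite prime_coprime.
Qed.

Lemma expn_dvd_det_of_left_kernel m n (K : 'M[int]_m) (M : 'M['F_p]_(n, m)) :
  row_free M -> M *m map_mx modp K = 0 -> (p ^ n %| `|\det K|)%N.
Proof.
move=> /eqnP rkM MK0.
have le_nm : (n <= m)%N by rewrite -rkM rank_leq_col.
set U := row_ebase M.
set P := map_mx (fun x : 'F_p => (x : nat)%:Z) U.
have pidU : pid_mx n *m U = invmx (col_ebase M) *m M.
  by rewrite -{2}(mulmx_ebase M) rkM !mulmxA mulVmx ?col_ebase_unit // mul1mx.
have UK0 (i : 'I_m) j : (i < n)%N -> (U *m map_mx modp K) i j = 0.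
  move=> lt_in; have := congr1 (fun A => (A *m map_mx modp K) (Ordinal lt_in) j) pidU.
  rewrite -!mulmxA MK0 mulmx0 (pid_mxErow _ le_nm) mul_rowsub_mx mul1mx !mxE.
  by have -> : widen_ord le_nm (Ordinal lt_in) = i by apply: val_inj.
have dvd_PK : (p ^ n %| `|\det (P *m K)|)%N.
  apply: dvdn_det_dvdz_rows le_nm _ => i j lt_in.
  rewrite (dvdz_pcharf (pchar_Fp p_pr)); apply/eqP.
  by have := UK0 i j lt_in; rewrite -{1}(lift_Fp_mx U) -map_mxM mxE.
have cop_P : coprime p `|\det P| by rewrite coprime_det_unitmx_Fp ?lift_Fp_mx ?row_ebase_unit.
by move: dvd_PK; rewrite det_mulmx abszM Gauss_dvdr // coprimeXl.
Qed.

End ReductionModPrime.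

Lemma card_rV_submx (F : finFieldType) m n (W : 'M[F]_(m, n)) :
  #|[set v : 'rV[F]_n | (v <= W)%MS]| = (#|F| ^ \rank W)%N.
Proof.
have -> : [set v : 'rV[F]_n | (v <= W)%MS] =
          [set u *m row_base W | u in [set: 'rV_(\rank W)]].
  apply/setP => v; rewrite inE; apply/idP/imsetP => [vW|[u _ ->]].
    have /submxP[u ->] : (v <= row_base W)%MS by rewrite eq_row_base.
    by exists u; rewrite ?inE.
  by apply: submx_trans (submxMl u _) _; rewrite eq_row_base.
rewrite card_imset; last exact: row_free_inj (row_base_free W).
by rewrite cardsT card_mx mul1n.
Qed.

Lemma card_preimset_sub_imset (aT rT : finType) (f : aT -> rT) (A : {set rT}) :
  injective f -> A \subset f @: setT -> #|f @^-1: A| = #|A|.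
Proof.
move=> injf sA; rewrite -(card_imset _ injf); congr #|pred_of_set _|.
apply/setP => x; apply/imsetP/idP => [[y] | xA]; first by rewrite inE => ? ->.
by case/imsetP: (subsetP sA x xA) => y _ def_x; exists y; rewrite // inE -def_x.
Qed.

Lemma F2_eq_nat_neq0 (x : 'F_2) : x = (x != 0)%:R.
Proof. by apply/eqP; case: x => [[|[|]]]. Qed.

Lemma natr_F2_odd n : (n%:R : 'F_2) = (odd n)%:R.
Proof. by rewrite -(@Fp_nat_mod 2) // modn2. Qed.

Section CharacteristicVectors.
Variables (T : finType) (m : nat) (g : 'I_m -> T).

Definition charvec (A : {set T}) : 'rV['F_2]_m := \row_j (g j \in A)%:R.

Lemma charvec_symdiff (A B : {set T}) : charvec (symdiff A B) = charvec A + charvec B.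
Proof.
apply/matrixP => i j; rewrite !mxE !inE.
by case: (g j \in A); case: (g j \in B); rewrite ?addr0 ?add0r //; apply/eqP.
Qed.

Lemma charvec_bigsymdiff k (S : {set 'I_k}) (C : 'I_k -> {set T}) :
  charvec (\big[@symdiff T/set0]_(i in S) C i) = \sum_(i in S) charvec (C i).
Proof.
apply: (big_morph charvec charvec_symdiff).
by apply/matrixP => i j; rewrite !mxE inE.
Qed.

Lemma charvec_eq0 (A : {set T}) : A \subset g @: setT -> (charvec A == 0) = (A == set0).
Proof.
move=> sA; apply/eqP/eqP => [A0 | ->]; last first.
  by apply/matrixP => i j; rewrite !mxE inE.
apply/setP => x; rewrite inE; apply/negbTE/negP => xA.
have /imsetP[j _ def_x] := subsetP sA x xA.
have /eqP := congr1 (fun v : 'rV_m => v 0 j) A0.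
by rewrite !mxE -def_x xA oner_eq0.
Qed.

Lemma row_free_charvec k (C : 'I_k -> {set T}) :
  (forall i, C i \subset g @: setT) -> lin_indep C ->
  row_free (\matrix_(i < k) charvec (C i)).
Proof.
move=> sC indC; apply/inj_row_free => v v0.
pose S := [set i | v 0 i != 0].
have sum_CS : charvec (\big[@symdiff T/set0]_(i in S) C i) = 0.
  rewrite -{}v0 charvec_bigsymdiff mulmx_sum_row [RHS](bigID [in S]) /=.
  rewrite [X in _ + X]big1 ?addr0 => [|i]; last by rewrite inE negbK => /eqP ->; rewrite scale0r.
  by apply: eq_bigr => i; rewrite inE rowK => vi; rewrite [v 0 i]F2_eq_nat_neq0 vi scale1r.
have sub_CS : \big[@symdiff T/set0]_(i in S) C i \subset g @: setT.
  elim/big_rec: _ => [|i X _ sX]; first exact: sub0set.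
  by rewrite /symdiff subUset !(subset_trans (subsetDl _ _)).
have S0 : S = set0 by apply: indC; apply/eqP; rewrite -charvec_eq0 // sum_CS.
apply/rowP => i; rewrite mxE; apply/eqP/negPn.
by have := in_set0 i; rewrite -S0 inE => ->.
Qed.
End CharacteristicVectors.

Section Channels.
Variables (N : nat) (e : rel 'I_N).

(* Rows are indexed through g and columns through h, with entry e (h w) (g b)
   at (b, w): column w of [charvec g C *m adj_F2 g h] counts N(h w) :&: C.
   Transposed Kasteleyn matrices reduce to such matrices. *)
Definition adj_F2 m k (g : 'I_m -> 'I_N) (h : 'I_k -> 'I_N) : 'M['F_2]_(m, k) :=
  \matrix_(b, w) (e (h w) (g b))%:R.

Lemma charvec_mul_adj_F2 m k (g : 'I_m -> 'I_N) (h : 'I_k -> 'I_N)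
    (C : {set 'I_N}) w :
  injective g -> C \subset g @: setT ->
  (charvec g C *m adj_F2 g h) 0 w = (odd #|nbhd e (h w) :&: C|)%:R.
Proof.
move=> injg sC; rewrite mxE.
rewrite (eq_bigr (fun b => if b \in g @^-1: (nbhd e (h w) :&: C) then 1 else 0)); last first.
  by move=> b _; rewrite !mxE !inE -natrM mulnb andbC; case: (_ && _).
rewrite -big_mkcond sumr_const card_preimset_sub_imset //; first exact: natr_F2_odd.
exact: subset_trans (subsetIr _ _) sC.
Qed.

Lemma channels_expn2_dvd_det m (g h : 'I_m -> 'I_N) (K : 'M[int]_m)
    n (C : 'I_n -> {set 'I_N}) :
  injective g -> map_mx intr K = adj_F2 g h ->
  (forall i, is_channel e (C i)) -> (forall i, C i \subset g @: setT) ->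
  lin_indep C -> (2 ^ n %| `|\det K|)%N.
Proof.
move=> injg K2 chC sC indC.
apply: (expn_dvd_det_of_left_kernel _ (row_free_charvec sC indC)) => //.
rewrite K2; apply/row_matrixP => i; rewrite row_mul rowK row0; apply/rowP => w.
by rewrite charvec_mul_adj_F2 // mxE (negPf (forallP (chC i) (h w))).
Qed.

End Channels.

Lemma map_mx_F2_signs m n (A K : 'M[int]_(m, n)) :
  (forall i j, K i j = A i j \/ K i j = - A i j) ->
  map_mx (intr : int -> 'F_2) K = map_mx intr A.
Proof.
move=> KA; apply/matrixP => i j; rewrite !mxE.
by case: (KA i j) => ->; rewrite ?rmorphN ?(oppr_pchar2 (pchar_Fp (isT : prime 2))).
Qed.

Lemma kasteleyn_mod2 N (e : rel 'I_N) (K : 'M[int]_N) :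
  kasteleyn_signing e K -> map_mx intr K^T = adj_F2 e id id.
Proof.
case=> /map_mx_F2_signs K2 _; rewrite -map_trmx K2.
by apply/matrixP => i j; rewrite !mxE rmorph_nat.
Qed.

Lemma is_channel_charvec N (e : rel 'I_N) (C : {set 'I_N}) :
  is_channel e C = (charvec id C *m adj_F2 e id id == 0).
Proof.
have sC : C \subset id @: setT by rewrite imset_id subsetT.
apply/forallP/eqP => [chC | C0 v].
  by apply/rowP => w; rewrite charvec_mul_adj_F2 // mxE (negPf (chC w)).
have := congr1 (fun u : 'rV_N => u 0 v) C0; rewrite charvec_mul_adj_F2 // mxE.
by case: odd => // /eqP; rewrite oner_eq0.
Qed.

Lemma card_channels N (e : rel 'I_N) :
  #|[set C | is_channel e C]| = (2 ^ \rank (kermx (adj_F2 e id id)))%N.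
Proof.
pose supp (v : 'rV['F_2]_N) := [set j | v 0 j != 0].
have charvecK : cancel (charvec id) supp.
  by move=> C; apply/setP => j; rewrite inE mxE; case: (j \in C); rewrite ?oner_eq0 ?eqxx.
have suppK : cancel supp (charvec id).
  by move=> v; apply/rowP => j; rewrite mxE inE -F2_eq_nat_neq0.
rewrite -(card_imset _ (can_inj charvecK)) (can2_imset_pre _ charvecK suppK).
rewrite -[X in _ = (X ^ _)%N](card_Fp (isT : prime 2)) -card_rV_submx.
congr #|pred_of_set _|.
by apply/setP => v; rewrite !inE is_channel_charvec suppK sub_kermx.
Qed.

Lemma setI_pair_in_notin (T : finType) (x y : T) (P : {set T}) :
  x \in P -> y \notin P -> [set x; y] :&: P = [set x].
Proof.
move=> xP yP; apply/setP => z; rewrite !inE.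
by case: (eqVneq z x) => [->|_]; [rewrite xP | case: eqP => [->|]]; rewrite ?(negPf yP) ?andbF.
Qed.

Lemma card_setI_pair (T : finType) (x y : T) (P : {set T}) :
  (x \in P) != (y \in P) -> #|[set x; y] :&: P| = 1%N.
Proof.
case: (boolP (x \in P)) => xP; case: (boolP (y \in P)) => yP // _.
  by rewrite setI_pair_in_notin ?cards1.
by rewrite setUC setI_pair_in_notin ?cards1.
Qed.

Lemma card_transversal_of_partition (T : finType) (M : {set {set T}}) (P : {set T}) :
  (forall v, #|[set A in M | v \in A]| = 1%N) ->
  (forall A, A \in M -> #|A :&: P| = 1%N) -> #|P| = #|M|.
Proof.
move=> Mv MP; rewrite -sum1_card -[RHS]sum1_card.
transitivity (\sum_(v in P) \sum_(A | (A \in M) && (v \in A)) 1)%N.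
  by apply: eq_bigr => v _; rewrite -[in LHS](Mv v) -sum1_card; apply: eq_bigl => A; rewrite inE.
rewrite (exchange_big_dep [in M]) => [|v A _ /andP[] //].
apply: eq_bigr => A AM; rewrite -[in RHS](MP A AM) -sum1_card.
by apply: eq_bigl => v; rewrite !inE AM andbC.
Qed.

Lemma perfect_matching_balanced N (e : rel 'I_N) col M :
  proper_2col e col -> perfect_matching e M -> #|whites col| = #|blacks col|.
Proof.
move=> col_e /andP[/forall_inP Medge /forallP Mv].
have cardM (P : {set 'I_N}) : (forall x y, e x y -> (x \in P) != (y \in P)) -> #|P| = #|M|.
  move=> eP; apply: card_transversal_of_partition => [v | A /Medge].
    exact/eqP.
  by case/existsP=> x /existsP[y /andP[/eP xyP /eqP ->]]; apply: card_setI_pair.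
by rewrite !cardM // => x y /col_e; rewrite !inE; case: (col x); case: (col y).
Qed.

Lemma bip_kasteleyn_mod2 N (e : rel 'I_N) (col : 'I_N -> bool) H
    (wb : #|whites col| = #|blacks col|) :
  bip_kasteleyn_signing e H ->
  map_mx intr (castmx (wb, erefl #|blacks col|) H)^T =
    adj_F2 e enum_val (enum_val \o cast_ord (esym wb)).
Proof.
case=> /map_mx_F2_signs H2 _; apply/matrixP => b w.
have /matrixP/(_ (cast_ord (esym wb) w) b) := H2.
by rewrite !mxE castmxE cast_ord_id rmorph_nat.
Qed.

Lemma subset_imset_enum_val (T : finType) (A : {set T}) :
  A \subset (enum_val : 'I_#|A| -> T) @: setT.
Proof.
by apply/subsetP => x xA; rewrite -(enum_rankK_in xA xA) imset_f.
Qed.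

Local Close Scope ring_scope.

Theorem theorem3p5 (N : nat) (e : rel 'I_N) (He : simple_graph e)
  (HK : exists K : 'M[int]_N, kasteleyn_signing e K) :
  (forall (n : nat) (C : 'I_n -> {set 'I_N}),
     (forall i, is_channel e (C i)) -> lin_indep C ->
     (2 ^ n %| (num_pm e) ^ 2)%N)
  /\ (#|[set C : {set 'I_N} | is_channel e C]| %| (num_pm e) ^ 2)%N
  /\ (forall col : 'I_N -> bool, proper_2col e col ->
       (exists H, @bip_kasteleyn_signing N e col H) ->
       forall (n : nat) (C : 'I_n -> {set 'I_N}),
         (forall i, is_channel e (C i) /\ C i \subset blacks col) ->
         lin_indep C ->
         (2 ^ n %| num_pm e)%N).
Proof.
have [K KK] := HK; have K2 := kasteleyn_mod2 KK.
have detK : `|(\det K^T)%R| = num_pm e ^ 2 by rewrite det_tr (proj2 KK).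
have sub_id (C : {set 'I_N}) : C \subset id @: setT by rewrite imset_id subsetT.
split; [|split].
- move=> n C chC indC; rewrite -detK.
  exact: channels_expn2_dvd_det K2 chC (fun i => sub_id (C i)) indC.
- rewrite card_channels -detK.
  apply: (expn_dvd_det_of_left_kernel _ (row_base_free _)) => //.
  by rewrite K2; apply/sub_kermxP; rewrite eq_row_base.
move=> col colP [H HH] n C chC indC.
have [->|pm_gt0] := posnP (num_pm e); first exact: dvdn0.
have [M pmM] : exists M, perfect_matching e M.
  by case/card_gt0P: pm_gt0 => M; rewrite inE; exists M.
have wb := perfect_matching_balanced colP pmM.
rewrite -[num_pm e]/`|Posz (num_pm e)| -(proj2 HH wb) -det_tr.
apply: (channels_expn2_dvd_det enum_val_inj (bip_kasteleyn_mod2 wb HH)) indC.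
  by move=> i; case: (chC i).
by move=> i; case: (chC i) => _ /subset_trans; apply; apply: subset_imset_enum_val.
Qed.
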